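(* Let $K$ be a field, $S=K[x_1,\dots,x_n]$, $M$ a finitely generated graded $S$-module, ${\bf f}=f_1,\dots,f_m$ a sequence of homogeneous polynomials, $I=({\bf f})$, and $g_1,\dots,g_v\in I$ homogeneous; set ${\bf g}=g_1,\dots,g_v$. Then for every $i$, $$\operatorname{reg} Z_i({\bf f},M)\leq \operatorname{reg} Z_i({\bf f},{\bf g},M).$$
   Context: For a sequence ${\bf h}=h_1,\dots,h_r$ of homogeneous polynomials (not necessarily a minimal generating set of the ideal it generates), $K({\bf h},M)$ denotes the Koszul complex $\bigwedge^\bullet G\otimes_S M$, where $G=\bigoplus_{j=1}^r S(-\deg h_j)$ with basis $e_j$ of degree $\deg h_j$ and differential induced by $e_j\mapsto h_j$ (degree $0$); $Z_i({\bf h},M)$ is its graded module of cycles in homological position $i$. $({\bf f},{\bf g})$ denotes the concatenated sequence $f_1,\dots,f_m,g_1,\dots,g_v$. $\operatorname{reg}$ denotes Castelnuovo–Mumford regularity ($-\infty$ for the zero module). *)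

From HB Require Import structures.
From mathcomp Require Import all_boot all_order all_algebra.
From mathcomp Require Import mpoly.
Set Implicit Arguments. Unset Strict Implicit. Unset Printing Implicit Defensive.
Import Order.TTheory GRing.Theory Num.Theory.
Local Open Scope ring_scope.

Section Koszul.
Variables (K : fieldType) (n : nat).
Local Notation S := {mpoly K[n]}.

Definition graded_module (M : lmodType S) (hom : int -> M -> Prop) : Prop :=
  [/\ (forall d, hom d 0),
      (forall d x y, hom d x -> hom d y -> hom d (x + y)),
      (forall d (e : nat) (p : S) x, p \is e.-homog -> hom d x ->
                                     hom (d + e%:Z) (p *: x)),
      (forall x : M, exists (s : seq int) (xs : int -> M),
           (forall d, hom d (xs d)) /\ x = \sum_(d <- s) xs d) &
      (forall (s : seq int) (xs : int -> M), uniq s ->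
           (forall d, hom d (xs d)) -> \sum_(d <- s) xs d = 0 ->
           forall d, d \in s -> xs d = 0)].

Definition fin_gen (M : lmodType S) : Prop :=
  exists gens : seq M, forall x : M,
    exists c : 'I_(size gens) -> S, x = \sum_(i < size gens) c i *: gens`_i.

(* Koszul complex K(h, V) = ∧G ⊗ V, an element being represented by its
   coefficients c J (the coefficient of e_J = e_{j1} ∧ ... ∧ e_{jk},
   j1 < ... < jk, J = {j1,...,jk}).  Homological position i = support on
   sets of cardinality i.  Differential: e_J ↦ Σ_t (-1)^(t-1) h_{jt} e_{J\jt}. *)
Definition ksign r (J : {set 'I_r}) (j : 'I_r) : S :=
  (-1) ^+ #|[set k in J | (k < j)%N]|.

Definition kdiff (V : lmodType S) r (h : 'I_r -> S)
    (c : {ffun {set 'I_r} -> V}) : {ffun {set 'I_r} -> V} :=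
  [ffun J : {set 'I_r} => \sum_(j < r | j \notin J) (ksign J j * h j) *: c (j |: J)].

Definition kcycles (V : lmodType S) r (h : 'I_r -> S) (i : nat)
    (c : {ffun {set 'I_r} -> V}) : Prop :=
  (forall J : {set 'I_r}, #|J| <> i -> c J = 0) /\ kdiff h c = 0.

(* Grading of K(h, V): e_j has degree dh j, so c is homogeneous of degree d
   iff each coefficient c J is homogeneous of degree d - Σ_{j∈J} dh j. *)
Definition khom (V : lmodType S) r (dh : 'I_r -> int) (hom : int -> V -> Prop)
    (d : int) (c : {ffun {set 'I_r} -> V}) : Prop :=
  forall J : {set 'I_r}, hom (d - \sum_(j in J) dh j) (c J).

(* Castelnuovo–Mumford regularity through graded Betti numbers:
   reg N = max { j - k : Tor_k^S(K, N)_j <> 0 } (-oo if N = 0), where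
   Tor_k^S(K,N)_j = H_k(x_1..x_n; N)_j is computed by the Koszul complex of
   the variables.  regwit N hom k j  <->  H_k(x; N)_j <> 0, for a graded
   submodule N (a predicate) of an S-module V graded by hom:
   there is a homogeneous degree-j cycle of K_k(x; N) that is not a boundary. *)
Definition regwit (V : lmodType S) (N : V -> Prop) (hom : int -> V -> Prop)
    (k : nat) (j : int) : Prop :=
  exists c : {ffun {set 'I_n} -> V},
    [/\ (forall J : {set 'I_n}, N (c J)),
        (forall J : {set 'I_n}, #|J| <> k -> c J = 0),
        khom (fun _ => 1) hom j c,
        kdiff (fun i : 'I_n => 'X_i) c = 0 &
        ~ (exists b : {ffun {set 'I_n} -> V},
              (forall J : {set 'I_n}, N (b J)) /\ kdiff (fun i : 'I_n => 'X_i) b = c)].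

Definition reg_le (V1 V2 : lmodType S)
    (N1 : V1 -> Prop) (hom1 : int -> V1 -> Prop)
    (N2 : V2 -> Prop) (hom2 : int -> V2 -> Prop) : Prop :=
  forall (k : nat) (j : int), regwit N1 hom1 k j ->
    exists (k' : nat) (j' : int), regwit N2 hom2 k' j' /\ j - k%:Z <= j' - k'%:Z.

End Koszul.

Definition catf T m v (f : 'I_m -> T) (g : 'I_v -> T) (k : 'I_(m + v)) : T :=
  match split k with inl i => f i | inr j => g j end.

From HB Require Import structures.
From mathcomp Require Import all_boot all_order all_algebra.
From mathcomp Require Import mpoly.
From mathcomp Require Import ring.
Set Implicit Arguments. Unset Strict Implicit. Unset Printing Implicit Defensive.
Import Order.TTheory GRing.Theory Num.Theory.
Local Open Scope ring_scope.

(* Since every g_j is an S-combination of the f's, the basis change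
   e_(m+j) |-> e_(m+j) - sum_l a_jl e_l of G turns K((f,g), M) into
   K((f,0), M) = K(f, M) (x) /\(e_(m+1), ..., e_(m+v)), by an isomorphism
   that fixes K(f, M).  Hence Z_i(f, M) is an S-linear retract of
   Z_i((f,g), M) through the graded inclusion, so its Koszul homology with
   respect to the variables embeds degreewise into that of Z_i((f,g), M),
   which bounds the regularities. *)

Section KoszulAlgebra.
Variables (K : fieldType) (n : nat) (V : lmodType {mpoly K[n]}) (r : nat).
Local Notation S := {mpoly K[n]}.
Local Notation sg := (@ksign K n r).
Local Notation KV := {ffun {set 'I_r} -> V}.

Lemma ksignU1 (L : {set 'I_r}) t j : t \notin L ->
  sg (t |: L) j = (if (t < j)%N then -1 else 1) * sg L j.
Proof.
move=> tL; rewrite /ksign; case: ifP => tj.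
  have -> : [set k in t |: L | (k < j)%N] = t |: [set k in L | (k < j)%N].
    by apply/setP=> k; rewrite !inE; case: (eqVneq k t) => [->|] //=; rewrite tj.
  by rewrite cardsU1 inE (negbTE tL) /= add1n exprS.
have -> : [set k in t |: L | (k < j)%N] = [set k in L | (k < j)%N].
  by apply/setP=> k; rewrite !inE; case: (eqVneq k t) => [->|] //=; rewrite tj andbF.
by rewrite mul1r.
Qed.

Lemma ksign_sqr L j : sg L j * sg L j = 1.
Proof. by rewrite -expr2 /ksign sqrr_sign. Qed.

Lemma ksign_antisym (L : {set 'I_r}) j k : j \notin L -> k \notin L -> j != k ->
  sg L j * sg (j |: L) k = - (sg L k * sg (k |: L) j).
Proof.
move=> jL kL; rewrite !ksignU1 //.
by case: ltngtP => [_ _|_ _|/val_inj -> /[!eqxx]//]; ring.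
Qed.

Lemma ksignU1_swap (L : {set 'I_r}) j k : j \notin L -> k \notin L -> j != k ->
  sg (k |: L) j * sg (j |: L) k = - (sg L j * sg L k).
Proof.
move=> jL kL; rewrite !ksignU1 //.
by case: ltngtP => [_ _|_ _|/val_inj -> /[!eqxx]//]; ring.
Qed.

Definition kwedge (u : 'I_r -> S) (c : KV) : KV :=
  [ffun J : {set 'I_r} => \sum_(t in J) (sg (J :\ t) t * u t) *: c (J :\ t)].

Definition kdelta (p : 'I_r) : 'I_r -> S := fun k => (k == p)%:R.

Lemma kdiff_is_linear h : linear (@kdiff K n V r h).
Proof.
move=> s c d; apply/ffunP=> J; rewrite !ffunE scaler_sumr -big_split.
by apply: eq_bigr => k _; rewrite !ffunE scalerDr !scalerA mulrC.
Qed.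
HB.instance Definition _ h :=
  GRing.isLinear.Build S KV KV *:%R (@kdiff K n V r h) (kdiff_is_linear h).

Lemma kwedge_is_linear u : linear (kwedge u).
Proof.
move=> s c d; apply/ffunP=> J; rewrite !ffunE scaler_sumr -big_split.
by apply: eq_bigr => k _; rewrite !ffunE scalerDr !scalerA mulrC.
Qed.
HB.instance Definition _ u :=
  GRing.isLinear.Build S KV KV *:%R (kwedge u) (kwedge_is_linear u).

Lemma eq_kdiff h h' (c : KV) : h =1 h' -> kdiff h c = kdiff h' c.
Proof. by move=> e; apply/ffunP=> J; rewrite !ffunE; apply: eq_bigr => k _; rewrite e. Qed.

Lemma eq_kcycles h h' i (c : KV) : h =1 h' -> kcycles h i c -> kcycles h' i c.
Proof. by move=> e [csupp ccyc]; split; rewrite // -(eq_kdiff _ e). Qed.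

Lemma kdiffB_delta h p w (c : KV) :
  kdiff (fun k => h k - kdelta p k * w) c = kdiff h c - w *: kdiff (kdelta p) c.
Proof.
apply/ffunP=> J; rewrite !ffunE scaler_sumr -sumrB.
by apply: eq_bigr => k _; rewrite scalerA -scalerBl; congr (_ *: _); ring.
Qed.

Lemma kdiff_anticomm a b (c : KV) : kdiff a (kdiff b c) + kdiff b (kdiff a c) = 0.
Proof.
pose T (a b : 'I_r -> S) (J : {set 'I_r}) (j k : 'I_r) : V :=
  if (j \notin J) && (k \notin j |: J) then
    (sg J j * a j * (sg (j |: J) k * b k)) *: c (k |: (j |: J)) else 0.
have diff_diffE a' b' (J : {set 'I_r}) : kdiff a' (kdiff b' c) J = \sum_j \sum_k T a' b' J j k.
  rewrite ffunE big_mkcond; apply: eq_bigr => j _ /=.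
  case: ifP => jJ; last by rewrite big1 // => k _; rewrite /T jJ.
  rewrite ffunE scaler_sumr big_mkcond; apply: eq_bigr => k _ /=.
  by rewrite /T jJ /=; case: ifP; rewrite ?scaler0 // scalerA.
apply/ffunP=> J; rewrite ffunE !diff_diffE [X in _ + X = _]exchange_big -big_split ffunE.
apply: big1 => j _; rewrite -big_split; apply: big1 => k _ /=.
rewrite /T !inE !negb_or.
case jJ: (j \in J); case kJ: (k \in J); rewrite ?andbF ?addr0 //=.
case: (eqVneq k j) => [->|kj]; rewrite ?eqxx ?andbF ?addr0 //=.
rewrite setUCA -scalerDl mulrACA (ksign_antisym (negbT jJ) (negbT kJ)) 1?eq_sym //.
by rewrite (_ : _ + _ = 0) ?scale0r //; ring.
Qed.

Lemma kdiff_wedge a u (c : KV) :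
  kdiff a (kwedge u c) + kwedge u (kdiff a c) = (\sum_k u k * a k) *: c.
Proof.
apply/ffunP=> J; rewrite ffunE [RHS]ffunE.
have diff_wedgeE : kdiff a (kwedge u c) J = \sum_(j | j \notin J)
   ((sg J j * a j * (sg J j * u j)) *: c J + \sum_(t in J)
     (sg J j * a j * (sg (j |: (J :\ t)) t * u t)) *: c (j |: (J :\ t))).
  rewrite ffunE; apply: eq_bigr => j jJ.
  rewrite ffunE (big_setU1 _ jJ) /= setU1K // scalerDr scaler_sumr scalerA.
  congr (_ + _); apply: eq_bigr => t tJ; rewrite scalerA.
  suff -> : (j |: J) :\ t = j |: (J :\ t) by [].
  apply/setP=> x; rewrite !inE; case: (eqVneq x t) => [->|] //=.
  by case: (eqVneq t j) => [ejt|//]; rewrite -ejt tJ in jJ.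
have wedge_diffE : kwedge u (kdiff a c) J = \sum_(t in J)
   ((sg (J :\ t) t * u t * (sg (J :\ t) t * a t)) *: c J + \sum_(j | j \notin J)
     (sg (J :\ t) t * u t * (sg (J :\ t) j * a j)) *: c (j |: (J :\ t))).
  rewrite ffunE; apply: eq_bigr => t tJ.
  rewrite ffunE (bigD1 t) ?inE ?eqxx //= setD1K // scalerDr scaler_sumr scalerA.
  congr (_ + _); apply: eq_big => [j|j _]; last by rewrite scalerA.
  by rewrite !inE; case: (eqVneq j t) => [->|]; rewrite ?tJ ?andbT.
rewrite diff_wedgeE wedge_diffE !big_split /= addrACA.
rewrite [X in _ + X](_ : _ = 0) ?addr0.
  rewrite scaler_suml [RHS](bigID (mem J)) /= addrC.
  by congr (_ + _); apply: eq_big => // k _; rewrite mulrACA ksign_sqr mul1r mulrC.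
rewrite [X in _ + X]exchange_big -big_split /=; apply: big1 => j jJ.
rewrite -big_split /=; apply: big1 => t tJ; rewrite -scalerDl.
have jt : j != t by apply: contraNneq jJ => ->.
rewrite -{1}(setD1K tJ) mulrACA ksignU1_swap ?inE ?eqxx ?negb_and ?jJ ?orbT //.
by rewrite (_ : _ + _ = 0) ?scale0r //; ring.
Qed.

Lemma kdiff_delta_sqr p (c : KV) : kdiff (kdelta p) (kdiff (kdelta p) c) = 0.
Proof.
apply/ffunP=> J; rewrite !ffunE; apply: big1 => j _.
rewrite ffunE scaler_sumr; apply: big1 => k; rewrite !inE negb_or => /andP[kj _].
rewrite scalerA /kdelta.
case: (eqVneq k p) => [ekp|kp]; last by rewrite /= !mulr0 scale0r.
case: (eqVneq j p) => [ejp|jp]; last by rewrite /= mulr0 mul0r scale0r.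
by rewrite ekp ejp eqxx in kj.
Qed.

Lemma kdiff_delta_eq0 (p : 'I_r) (c : KV) :
  (forall J : {set 'I_r}, p \in J -> c J = 0) -> kdiff (kdelta p) c = 0.
Proof.
move=> hc; apply/ffunP=> J; rewrite !ffunE; apply: big1 => j _.
case: (eqVneq j p) => [->|ne]; first by rewrite hc ?setU11 ?scaler0.
by rewrite /kdelta (negbTE ne) mulr0 scale0r.
Qed.

(* The map induced on /\G (x) V by the basis change e_p |-> e_p + u, for
   [u p = 0]. *)
Definition kshear u p (c : KV) : KV := c + kwedge u (kdiff (kdelta p) c).

Lemma kshear_is_linear u p : linear (kshear u p).
Proof. by move=> s c d; rewrite /kshear !linearP scalerDr addrACA. Qed.
HB.instance Definition _ u p :=
  GRing.isLinear.Build S KV KV *:%R (kshear u p) (kshear_is_linear u p).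

Lemma kdiff_kshear h u p (c : KV) : u p = 0 ->
  kdiff (fun k => h k - kdelta p k * \sum_l u l * h l) (kshear u p c) =
  kshear u p (kdiff h c).
Proof.
move=> up; rewrite !kdiffB_delta; set w := \sum_l u l * h l.
have wedgeE (x : KV) : kdiff h (kwedge u x) = w *: x - kwedge u (kdiff h x).
  by rewrite -kdiff_wedge addrK.
have delta_wedgeE (x : KV) : kdiff (kdelta p) (kwedge u x) = - kwedge u (kdiff (kdelta p) x).
  apply/eqP; rewrite -addr_eq0 kdiff_wedge (_ : \sum_k _ = 0) ?scale0r //.
  rewrite (bigD1 p) //= up mul0r add0r big1 // => k kp.
  by rewrite /kdelta (negbTE kp) mulr0.
have delta_diffE (x : KV) : kdiff h (kdiff (kdelta p) x) = - kdiff (kdelta p) (kdiff h x).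
  by apply/eqP; rewrite -addr_eq0 kdiff_anticomm.
rewrite /kshear !linearD /= wedgeE delta_wedgeE kdiff_delta_sqr linear0 oppr0 scaler0.
by rewrite delta_diffE linearN opprK subr0 addrA addrAC addrK.
Qed.

Lemma kshear_cycles h u p i (c : KV) : u p = 0 -> kcycles h i c ->
  kcycles (fun k => h k - kdelta p k * \sum_l u l * h l) i (kshear u p c).
Proof.
move=> up [csupp ccyc]; split; last by rewrite kdiff_kshear // ccyc linear0.
move=> J hJ; rewrite ffunE csupp // add0r ffunE; apply: big1 => t tJ.
rewrite ffunE big1 ?scaler0 // => j jJt; rewrite csupp ?scaler0 //.
by rewrite cardsU1 jJt; rewrite (cardsD1 t J) tJ in hJ.
Qed.

Lemma kshear_id u p (c : KV) : (forall J : {set 'I_r}, p \in J -> c J = 0) ->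
  kshear u p c = c.
Proof. by move=> hc; rewrite /kshear kdiff_delta_eq0 // linear0 addr0. Qed.

End KoszulAlgebra.

Arguments kdelta {K n r} p _.

Section BlockEmbedding.
Variables (K : fieldType) (n : nat) (V : lmodType {mpoly K[n]}) (m v : nat).
Local Notation S := {mpoly K[n]}.
Local Notation L := (@lshift m v).
Local Notation R := (@rshift m v).

Lemma catf_lshift T (a : 'I_m -> T) (b : 'I_v -> T) l : catf a b (L l) = a l.
Proof. by rewrite /catf -[L l]/(unsplit (inl l)) unsplitK. Qed.

Lemma catf_rshift T (a : 'I_m -> T) (b : 'I_v -> T) j : catf a b (R j) = b j.
Proof. by rewrite /catf -[R j]/(unsplit (inr j)) unsplitK. Qed.

Lemma rshift_notin_imset (A : {set 'I_m}) j : R j \notin L @: A.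
Proof. by apply/imsetP => -[x _ /eqP]; rewrite eq_rlshift. Qed.

Lemma mem_imset_lshift (A : {set 'I_m}) l : (L l \in L @: A) = (l \in A).
Proof. exact/mem_imset/lshift_inj. Qed.

Lemma preimset_imset_lshift (A : {set 'I_m}) : L @^-1: (L @: A) = A.
Proof. by apply/setP=> x; rewrite inE mem_imset_lshift. Qed.

Lemma imset_preimset_lshift (J : {set 'I_(m + v)}) :
  [forall j, R j \notin J] -> L @: (L @^-1: J) = J.
Proof.
move/forallP=> hJ; apply/setP=> k; case: (split_ordP k) => [x ->|x ->].
  by rewrite mem_imset_lshift inE.
by rewrite (negbTE (rshift_notin_imset _ _)) (negbTE (hJ x)).
Qed.

Lemma ksign_imset_lshift (A : {set 'I_m}) l : ksign K n (L @: A) (L l) = ksign K n A l.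
Proof.
rewrite /ksign; congr (_ ^+ _); rewrite -(card_imset _ (@lshift_inj m v)).
apply: eq_card => k; rewrite inE; case: (split_ordP k) => [x ->|x ->].
  by rewrite !mem_imset_lshift inE.
by rewrite (negbTE (rshift_notin_imset _ _)); apply/esym/negbTE/rshift_notin_imset.
Qed.

Definition kwiden (c : {ffun {set 'I_m} -> V}) : {ffun {set 'I_(m + v)} -> V} :=
  [ffun J : {set 'I_(m + v)} => if [forall j, R j \notin J] then c (L @^-1: J) else 0].

Definition kshrink (c : {ffun {set 'I_(m + v)} -> V}) : {ffun {set 'I_m} -> V} :=
  [ffun A : {set 'I_m} => c (L @: A)].

Lemma kwiden_is_linear : linear kwiden.
Proof.
by move=> s c d; apply/ffunP=> J; rewrite !ffunE; case: ifP; rewrite ?scaler0 ?addr0 // ffunE.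
Qed.
HB.instance Definition _ :=
  GRing.isLinear.Build S {ffun {set 'I_m} -> V} {ffun {set 'I_(m + v)} -> V} *:%R
    kwiden kwiden_is_linear.

Lemma kshrink_is_linear : linear kshrink.
Proof. by move=> s c d; apply/ffunP=> J; rewrite !ffunE. Qed.
HB.instance Definition _ :=
  GRing.isLinear.Build S {ffun {set 'I_(m + v)} -> V} {ffun {set 'I_m} -> V} *:%R
    kshrink kshrink_is_linear.

Lemma kwiden_imset c (A : {set 'I_m}) : kwiden c (L @: A) = c A.
Proof.
rewrite ffunE preimset_imset_lshift ifT //.
by apply/forallP => j; apply: rshift_notin_imset.
Qed.

Lemma kwiden_rshift c (J : {set 'I_(m + v)}) j : R j \in J -> kwiden c J = 0.
Proof. by move=> hj; rewrite ffunE ifF //; apply/negbTE/forallPn; exists j; rewrite negbK. Qed.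

Lemma kshrinkK : cancel kwiden kshrink.
Proof. by move=> c; apply/ffunP=> A; rewrite ffunE kwiden_imset. Qed.

Lemma kdiff_kwiden (h : 'I_(m + v) -> S) c :
  kdiff h (kwiden c) = kwiden (kdiff (h \o L) c).
Proof.
apply/ffunP=> J; case: (boolP [forall j, R j \notin J]) => hJ.
  rewrite -(imset_preimset_lshift hJ) kwiden_imset; set A := L @^-1: J.
  rewrite !ffunE big_split_ord /= [X in _ + X]big1 ?addr0.
    apply: eq_big => [l|l _]; first by rewrite mem_imset_lshift.
    by rewrite ksign_imset_lshift -imsetU1 kwiden_imset.
  by move=> j _; rewrite (@kwiden_rshift _ _ j) ?scaler0 // setU11.
rewrite [RHS]ffunE (negbTE hJ) ffunE; apply: big1 => k _.
move: hJ => /forallPn [j]; rewrite negbK => hj.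
by rewrite (@kwiden_rshift _ _ j) ?scaler0 // setU1r.
Qed.

Lemma kdiff_kshrink (h : 'I_(m + v) -> S) c : (forall j, h (R j) = 0) ->
  kdiff (h \o L) (kshrink c) = kshrink (kdiff h c).
Proof.
move=> hR; apply/ffunP=> A; rewrite !ffunE big_split_ord /= [X in _ = _ + X]big1 ?addr0.
  apply: eq_big => [l|l _]; first by rewrite mem_imset_lshift.
  by rewrite ksign_imset_lshift ffunE imsetU1.
by move=> j _; rewrite hR mulr0 scale0r.
Qed.

Lemma kwiden_cycles (f : 'I_m -> S) (g : 'I_v -> S) i c :
  kcycles f i c -> kcycles (catf f g) i (kwiden c).
Proof.
move=> [csupp ccyc]; split.
  move=> J hJ; rewrite ffunE; case: ifP => // hR; apply: csupp.
  by rewrite -(card_imset _ (@lshift_inj m v)) imset_preimset_lshift.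
rewrite kdiff_kwiden (eq_kdiff _ (catf_lshift f g)) ccyc; exact: linear0.
Qed.

Lemma kshrink_cycles (f : 'I_m -> S) (h : 'I_(m + v) -> S) i c :
  (forall l, h (L l) = f l) -> (forall j, h (R j) = 0) ->
  kcycles h i c -> kcycles f i (kshrink c).
Proof.
move=> hL hR [csupp ccyc]; split.
  by move=> A hA; rewrite ffunE csupp // (card_imset _ (@lshift_inj m v)).
by rewrite -(eq_kdiff _ hL) kdiff_kshrink // ccyc linear0.
Qed.

Lemma kwiden_khom (df : 'I_m -> int) (dg : 'I_v -> int) (hom : int -> V -> Prop) d c :
  (forall e, hom e 0) -> khom df hom d c -> khom (catf df dg) hom d (kwiden c).
Proof.
move=> hom0 hc J; rewrite ffunE; case: ifP => [hR|_]; last exact: hom0.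
rewrite -{1}(imset_preimset_lshift hR) big_imset /=; last exact: in2W (@lshift_inj m v).
by rewrite (eq_bigr df) // => l _; rewrite catf_lshift.
Qed.

End BlockEmbedding.

Arguments kshrink {K n V m v} c.

Section RegularityRetract.
Variables (K : fieldType) (n : nat).
Local Notation S := {mpoly K[n]}.

Lemma kdiff_map (V1 V2 : lmodType S) r (h : 'I_r -> S) (i : {linear V1 -> V2})
    (c : {ffun {set 'I_r} -> V1}) :
  kdiff h [ffun J => i (c J)] = [ffun J => i (kdiff h c J)].
Proof.
apply/ffunP=> J; rewrite !ffunE raddf_sum; apply: eq_bigr => k _.
by rewrite ffunE; apply/esym/linearZ.
Qed.

(* The retraction [p] need not be graded: it is only used to pull boundaries
   back. *)
Lemma reg_le_retract (V1 V2 : lmodType S) (N1 : V1 -> Prop) hom1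
    (N2 : V2 -> Prop) hom2 (i : {linear V1 -> V2}) (p : {linear V2 -> V1}) :
  (forall x, N1 x -> N2 (i x)) -> (forall y, N2 y -> N1 (p y)) ->
  (forall d x, hom1 d x -> hom2 d (i x)) -> cancel i p ->
  reg_le N1 hom1 N2 hom2.
Proof.
move=> iN pN ihom ipK k j [c [cN csupp chom ccyc cnb]].
exists k, j; split; last by rewrite lexx.
exists [ffun J => i (c J)]; split.
- by move=> J; rewrite ffunE; apply: iN.
- by move=> J hJ; rewrite ffunE csupp ?linear0.
- by move=> J; rewrite ffunE; apply: ihom.
- by rewrite kdiff_map ccyc; apply/ffunP=> J; rewrite !ffunE linear0.
move=> [b [bN hb]]; apply: cnb; exists [ffun J => p (b J)]; split.
  by move=> J; rewrite ffunE; apply: pN.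
by rewrite kdiff_map hb; apply/ffunP=> J; rewrite !ffunE ipK.
Qed.

End RegularityRetract.

Section Elimination.
Variables (K : fieldType) (n : nat) (M : lmodType {mpoly K[n]}) (m v : nat).
Variables (f : 'I_m -> {mpoly K[n]}) (g : 'I_v -> {mpoly K[n]}).
Variable a : 'I_v -> 'I_m -> {mpoly K[n]}.
Hypothesis g_comb : forall j, g j = \sum_(l < m) a j l * f l.
Local Notation S := {mpoly K[n]}.
Local Notation KM := {ffun {set 'I_(m + v)} -> M}.

Definition kcoef (j : 'I_v) : 'I_(m + v) -> S := catf (a j) (fun _ => 0).

Definition kelim (s : seq 'I_v) (c : KM) : KM :=
  foldr (fun j => kshear (kcoef j) (rshift m j)) c s.

Definition gclear (s : seq 'I_v) : 'I_(m + v) -> S :=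
  catf f (fun j => if j \in s then 0 else g j).

Lemma kelim_is_linear s : linear (kelim s).
Proof. by elim: s => [|j s IH] k c d //=; rewrite IH linearP. Qed.
HB.instance Definition _ s := GRing.isLinear.Build S KM KM *:%R (kelim s) (kelim_is_linear s).

Lemma kelim_kwiden s c : kelim s (kwiden v c) = kwiden v c.
Proof.
elim: s => //= j s ->; apply: kshear_id => J.
exact: kwiden_rshift.
Qed.

Lemma gclear_cons j s : j \notin s ->
  gclear (j :: s) =1
  (fun k => gclear s k - kdelta (rshift m j) k * \sum_l kcoef j l * gclear s l).
Proof.
move=> js; have -> : \sum_l kcoef j l * gclear s l = g j.
  rewrite big_split_ord /= [X in _ + X]big1 => [|x _]; last by rewrite /kcoef catf_rshift mul0r.
  by rewrite addr0 g_comb; apply: eq_bigr => l _; rewrite /kcoef /gclear !catf_lshift.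
move=> k; case: (split_ordP k) => [l ->|x ->]; rewrite /gclear /kdelta.
  by rewrite !catf_lshift eq_lrshift mul0r subr0.
rewrite !catf_rshift eq_rshift inE; case: (eqVneq x j) => [->|_] /=.
  by rewrite (negbTE js) mul1r subrr.
by rewrite mul0r subr0.
Qed.

Lemma kelim_cycles s i c : uniq s -> kcycles (catf f g) i c -> kcycles (gclear s) i (kelim s c).
Proof.
elim: s => [_|j s IH /andP[js us] zc] /=; first exact: eq_kcycles.
apply: eq_kcycles (fun k => esym (gclear_cons js k)) _.
by apply: kshear_cycles (IH us zc); rewrite /kcoef catf_rshift.
Qed.

End Elimination.

Theorem lemma1p5 (K : fieldType) (n : nat) (M : lmodType {mpoly K[n]})
    (homM : int -> M -> Prop) (m v : nat)
    (f : 'I_m -> {mpoly K[n]}) (df : 'I_m -> nat)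
    (g : 'I_v -> {mpoly K[n]}) (dg : 'I_v -> nat) :
  graded_module homM -> fin_gen M ->
  (forall i, f i \is (df i).-homog) ->
  (forall j, g j \is (dg j).-homog) ->
  (forall j, exists a : 'I_m -> {mpoly K[n]}, g j = \sum_(i < m) a i * f i) ->
  forall i : nat,
    reg_le (kcycles f i) (khom (fun k => (df k)%:Z) homM)
           (kcycles (catf f g) i)
           (khom (catf (fun k => (df k)%:Z) (fun k => (dg k)%:Z)) homM).
Proof.
move=> gradedM _ _ _ g_in_I i.
have [a g_comb] := fin_all_exists g_in_I.
have [hom0 _ _ _ _] := gradedM.
apply: (reg_le_retract (i := kwiden v) (p := kshrink \o kelim a (enum 'I_v))).
- exact: kwiden_cycles.
- move=> c zc; apply: (@kshrink_cycles _ _ _ _ _ _ (gclear f g (enum 'I_v))).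
  + by move=> l; rewrite /gclear catf_lshift.
  + by move=> j; rewrite /gclear catf_rshift mem_enum.
  + exact: kelim_cycles (enum_uniq _) zc.
- by move=> d c; apply: kwiden_khom.
- by move=> c /=; rewrite kelim_kwiden kshrinkK.
Qed.
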